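(* Let $G$ be a graph of order $n$ with fair domination number $\gamma_f(G)$. Then $\mathcal{C}_f(G)\leq n-\gamma_f(G)+2$.
   Context: All graphs are finite and simple; $G=(V,E)$, $N(v)$ is the open neighborhood of $v$. A dominating set is $D\subseteq V$ such that every vertex of $V\setminus D$ has a neighbor in $D$. For an integer $k\geq 1$, a $k$-fair dominating set is a dominating set $D$ such that $|N(v)\cap D|=k$ for every $v\in V\setminus D$. A fair dominating set is a $k$-fair dominating set for some integer $k\geq 1$. The fair domination number $\gamma_f(G)$ is the minimum cardinality of a fair dominating set of $G$ if $G$ has an edge, and $\gamma_f(\overline{K_n})=n$ by convention. A fair coalition consists of two disjoint sets $A_1,A_2\subseteq V$, neither of which is a fair dominating set, such that $A_1\cup A_2$ is a fair dominating set. A fair coalition partition ($fc$-partition) of $G$ is a partition $\Upsilon=\{A_1,\dots,A_k\}$ of $V$ such that every $A_i$ is either a singleton fair dominating set of $G$, or is not a fair dominating set and forms a fair coalition with some other non-fair-dominating set $A_j\in\Upsilon$. The fair coalition number $\mathcal{C}_f(G)$ is the maximum number of parts of an $fc$-partition of $G$. *)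

(* A finite simple graph is a symmetric irreflexive relation
   e on a finType T (vertex set V = T, order n = #|T|). *)
From mathcomp Require Import all_boot.
Set Implicit Arguments. Unset Strict Implicit. Unset Printing Implicit Defensive.

Section FairCoalition.
Variables (T : finType) (e : rel T).

Definition nbhd (v : T) : {set T} := [set u | e v u].

Definition dominating (D : {set T}) : bool :=
  [forall v, (v \notin D) ==> [exists u in D, e v u]].

Definition kfair_dom (k : nat) (D : {set T}) : bool :=
  dominating D && [forall v, (v \notin D) ==> (#|nbhd v :&: D| == k)].

(* D is a fair dominating set: k-fair for some k >= 1.  Since
   #|N(v) :&: D| <= #|T|, restricting k to k <= #|T| loses nothing. *)
Definition fair_dom (D : {set T}) : bool :=
  [exists k : 'I_(#|T|.+1), (0 < k) && kfair_dom k D].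

Definition has_edge : bool := [exists u, exists v, e u v].

(* fair domination number; gamma_f of an edgeless graph is n by convention *)
Definition fair_dom_number : nat :=
  if has_edge then \big[minn/#|T|]_(D : {set T} | fair_dom D) #|D|
  else #|T|.

Definition fair_coalition (A1 A2 : {set T}) : bool :=
  [&& [disjoint A1 & A2], ~~ fair_dom A1, ~~ fair_dom A2
    & fair_dom (A1 :|: A2)].

Definition fc_partition (P : {set {set T}}) : bool :=
  partition P [set: T] &&
  [forall A in P,
     (fair_dom A && (#|A| == 1))
     || (~~ fair_dom A && [exists B in P, (B != A) && fair_coalition A B])].

Definition fair_coalition_number : nat :=
  \max_(P : {set {set T}} | fc_partition P) #|P|.

End FairCoalition.

From mathcomp Require Import all_boot zify.

Set Implicit Arguments. Unset Strict Implicit. Unset Printing Implicit Defensive.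

(** Let [P] be a fair coalition partition. If some part [A] is not a
    singleton fair dominating set, it has a coalition partner [B], so
    [#|A :|: B| >= gamma_f]; the remaining [#|P| - 2] parts are nonempty and
    disjoint from [A :|: B], hence [#|P| - 2 <= n - gamma_f]. Otherwise every
    part is a singleton fair dominating set, so [gamma_f <= 1] and
    [#|P| <= n]. *)

Lemma bigmin_leq_seq (I : eqType) (r : seq I) (P : pred I) (F : I -> nat) x j :
  j \in r -> P j -> \big[minn/x]_(i <- r | P i) F i <= F j.
Proof.
elim: r => // a r IHr; rewrite inE big_cons => /orP[/eqP <- | jr] Pj.
  by rewrite Pj geq_minl.
by case: (P a); [apply: leq_trans (geq_minr _ _) _|]; apply: IHr.
Qed.

Lemma fair_dom_number_leq (T : finType) (e : rel T) (D : {set T}) :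
  fair_dom e D -> fair_dom_number e <= #|D|.
Proof.
move=> fairD; rewrite /fair_dom_number; case: ifP => [_ | no_edge].
  by apply: bigmin_leq_seq; rewrite ?mem_index_enum.
suff -> : D = setT by rewrite cardsT.
apply/setP => v; rewrite inE; apply/negPn/negP => vND.
case/existsP: fairD => k /andP[_ /andP[/forallP/(_ v) domv _]].
case/existsP: (implyP domv vND) => u /andP[_ evu].
by move/negbT/negP: no_edge; apply; apply/existsP; exists v; apply/existsP; exists u.
Qed.

(* Each part outside [Q] is nonempty, so it contributes at least [1] to
   [#|D| = \sum_(X in P) #|X|]. *)
Lemma card_partition_leq (T : finType) (P Q : {set {set T}}) (D : {set T}) :
  partition P D -> Q \subset P ->
  #|P| + \sum_(X in Q) #|X| <= #|D| + #|Q|.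
Proof.
move=> partP QP; have P0 : set0 \notin P by case/and3P: partP.
rewrite (card_partition partP) [\sum_(X in P) _](big_setID Q) /= (setIidPr QP).
rewrite -(cardsID Q P) (setIidPr QP) addnAC [in X in _ <= X]addnC addnA leq_add2l.
rewrite -sum1_card; apply: leq_sum => X /setDP[XP _].
by rewrite card_gt0; apply: contraNneq P0 => <-.
Qed.

Lemma fc_partition_coalition (T : finType) (e : rel T) (P : {set {set T}}) A :
  fc_partition e P -> A \in P -> ~~ (fair_dom e A && (#|A| == 1)) ->
  exists2 B, B \in P & (B != A) && fair_dom e (A :|: B).
Proof.
case/andP=> _ /forallP/(_ A) fcA AP notSingle.
move: fcA; rewrite AP (negbTE notSingle) /= => /andP[_ /existsP[B]].
case/and3P=> BP BA /and4P[_ _ _ fairAB].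
by exists B; rewrite ?BA.
Qed.

Theorem theorem2p7 (T : finType) (e : rel T)
  (e_sym : symmetric e) (e_irr : irreflexive e) :
  fair_coalition_number e <= #|T| - fair_dom_number e + 2.
Proof.
apply/bigmax_leqP => P fcP; have partP : partition P [set: T] by case/andP: fcP.
have [[A AP notSingle] | allSingle] :
    (exists2 A, A \in P & ~~ (fair_dom e A && (#|A| == 1))) \/
    (forall A, A \in P -> fair_dom e A && (#|A| == 1)).
- by case: (boolP [forall A in P, fair_dom e A && (#|A| == 1)]) =>
    [/forall_inP | /forall_inPn[A AP]]; [right | left; exists A].
- have [B BP /andP[BA fairAB]] := fc_partition_coalition fcP AP notSingle.
  have ABP : [set A; B] \subset P by rewrite subUset !sub1set AP BP.
  have := card_partition_leq partP ABP.
  rewrite big_setU1 ?inE 1?eq_sym //= big_set1 cards2 eq_sym BA cardsT /=.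
  have := leq_trans (fair_dom_number_leq fairAB) (leq_card_setU A B).
  lia.
have leP : #|P| <= #|T|.
  by have := card_partition_leq partP (sub0set P); rewrite big_set0 cards0 cardsT; lia.
have [-> | [A AP]] := set_0Vmem P; first by rewrite cards0.
have /andP[fairA /eqP cardA] := allSingle A AP.
have := fair_dom_number_leq fairA; rewrite cardA; lia.
Qed.
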